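(* Consider the discrete setting described in the context, with $N$ odd, and let $F^n$ be the solution of the linearized scheme with $\sum_{i,j}\Delta x\Delta v(f^0_{ij}-g^0_{ij})=0$. Let $\Delta t_{\max}>0$. There is $\delta_2>0$ such that for all $\Delta t\le\Delta t_{\max}$ and all $\delta\in(0,\delta_2]$, there exists $K_\delta>0$ such that for all $n\ge1$ $$H^\Delta_\delta[F^{n+1}]-H^\Delta_\delta[F^n]\le-\Delta t\,K_\delta\,\|F^{n+1}\|_\Delta^2.$$
   Context: Space mesh: $N$ uniform cells of length $\Delta x$, $i\in\mathcal I=\mathbb Z/N\mathbb Z$ (periodic). Velocity mesh: $\Delta v=v^*/L$, $j\in\mathcal J=\{-L+1,\dots,L\}$, $v_j=(j-\tfrac12)\Delta v$. Time step $\Delta t>0$; $\lambda=\Delta x/(2\Delta t)$ a fixed positive constant. Fixed $\rho_\infty^*>0$. For $k=1,2$: $\chi_{k,j}>0$, $\chi_{k,j}=\chi_{k,1-j}$, $\sum_j\Delta v\chi_{k,j}=1$, $0<\underline D_k\le\sum_j\Delta v\,v_j^2\chi_{k,j}\le\overline D_k$, $\sum_j\Delta v\,v_j^4\chi_{k,j}\le\overline Q_k$. $(D^c_xu)_i=\frac{u_{i+1}-u_{i-1}}{2\Delta x}$; $\langle u,w\rangle_2=\sum_i\Delta x\,u_iw_i$. Densities $\rho_{f,i}=\sum_j\Delta vf_{ij}$, $\rho_{g,i}=\sum_j\Delta vg_{ij}$; $h=f-g$, $u^n_{h,i}=\sum_j\Delta vh^n_{ij}$, $J^n_{h,i}=\sum_j\Delta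 v\,v_jh^n_{ij}$. Linearized scheme ($n\ge0$): $\frac{f^{n+1}_{ij}-f^n_{ij}}{\Delta t}+\frac{1}{\Delta x\Delta v}(\mathcal F^{n+1}_{i+\frac12,j}-\mathcal F^{n+1}_{i-\frac12,j})=-\rho_\infty^*\chi_{1,j}\rho^{n+1}_{g,i}-(\rho_\infty^* )^{-1}f^{n+1}_{ij}$, $\frac{g^{n+1}_{ij}-g^n_{ij}}{\Delta t}+\frac{1}{\Delta x\Delta v}(\mathcal G^{n+1}_{i+\frac12,j}-\mathcal G^{n+1}_{i-\frac12,j})=-(\rho_\infty^* )^{-1}\chi_{2,j}\rho^{n+1}_{f,i}-\rho_\infty^*g^{n+1}_{ij}$, with $\mathcal F^{n+1}_{i+\frac12,j}=\Delta v\frac{v_j}{2}(f^{n+1}_{i+1,j}+f^{n+1}_{ij})-\Delta v\lambda(f^{n+1}_{i+1,j}-f^{n+1}_{ij})$, $\mathcal G$ likewise with $g$. Norm $\|F\|_\Delta^2=\sum_{i,j}\Delta x\Delta v\big(\frac{f_{ij}^2}{\chi_{1,j}\rho_\infty^*}+\frac{g_{ij}^2\rho_\infty^*}{\chi_{2,j}}\big)$. $\Phi^n$ solves $(D^c_xD^c_x\Phi^n)_i=-u^n_{h,i}$, $\sum_i\Delta x\Phi^n_i=0$. Modified entropy: $H^\Delta_\delta[F^n]=\frac12\|F^n\|_\Delta^2+\delta\langle J^n_h,D^c_x\Phi^n\rangle_2+\frac{\delta}{2\Delta t}\sum_i\Delta x\big((D^c_x\Phi^n)_i-(D^c_x\Phi^{n-1})_i\big)^2$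 (defined for $n\ge1$). *)

From mathcomp Require Import all_boot all_order all_algebra.
From mathcomp Require Import reals.
Set Implicit Arguments. Unset Strict Implicit. Unset Printing Implicit Defensive.
Import Order.TTheory GRing.Theory Num.Theory.
Local Open Scope ring_scope.

(* Space index i in Z/NZ is represented by 'I_N, with periodic successor
   [ordS i] (value (i+1) mod N) and predecessor [ord_pred i].
   Velocity index j in {-L+1,...,L} is represented by k : 'I_(2L),
   with j = k - L + 1; hence 1 - j corresponds to [rev_ord k]. *)

(* v_j = (j - 1/2) dv = (k - L + 1/2) dv *)
Definition vel (R : realType) (L : nat) (dv : R) (k : 'I_(2 * L)) : R :=
  (k%:R - L%:R + 2^-1) * dv.

Definition dens (R : realType) (N L : nat) (dv : R)
  (f : 'I_N -> 'I_(2 * L) -> R) (i : 'I_N) : R :=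
  \sum_(k < 2 * L) dv * f i k.

Definition curr (R : realType) (N L : nat) (dv : R)
  (f : 'I_N -> 'I_(2 * L) -> R) (i : 'I_N) : R :=
  \sum_(k < 2 * L) dv * vel dv k * f i k.

(* numerical flux at interface i+1/2 *)
Definition flux (R : realType) (N L : nat) (dv lam : R)
  (f : 'I_N -> 'I_(2 * L) -> R) (i : 'I_N) (k : 'I_(2 * L)) : R :=
  dv * (vel dv k / 2) * (f (ordS i) k + f i k)
  - dv * lam * (f (ordS i) k - f i k).

Definition Dc (R : realType) (N : nat) (dx : R) (u : 'I_N -> R) (i : 'I_N) : R :=
  (u (ordS i) - u (ord_pred i)) / (2 * dx).

Definition inner2 (R : realType) (N : nat) (dx : R) (u w : 'I_N -> R) : R :=
  \sum_(i < N) dx * u i * w i.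

Definition normD2 (R : realType) (N L : nat) (dx dv rho : R)
  (chi1 chi2 : 'I_(2 * L) -> R) (f g : 'I_N -> 'I_(2 * L) -> R) : R :=
  \sum_(i < N) \sum_(k < 2 * L)
     dx * dv * (f i k ^+ 2 / (chi1 k * rho) + g i k ^+ 2 * rho / chi2 k).

Definition linearized_scheme (R : realType) (N L : nat) (dt dx dv lam rho : R)
  (chi1 chi2 : 'I_(2 * L) -> R) (f g : nat -> 'I_N -> 'I_(2 * L) -> R) : Prop :=
  forall (n : nat) (i : 'I_N) (k : 'I_(2 * L)),
    (f n.+1 i k - f n i k) / dt
      + (flux dv lam (f n.+1) i k - flux dv lam (f n.+1) (ord_pred i) k) / (dx * dv)
    = - rho * chi1 k * dens dv (g n.+1) i - rho^-1 * f n.+1 i k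
  /\
    (g n.+1 i k - g n i k) / dt
      + (flux dv lam (g n.+1) i k - flux dv lam (g n.+1) (ord_pred i) k) / (dx * dv)
    = - rho^-1 * chi2 k * dens dv (f n.+1) i - rho * g n.+1 i k.

Definition is_potential (R : realType) (N L : nat) (dx dv : R)
  (f g : nat -> 'I_N -> 'I_(2 * L) -> R) (Phi : nat -> 'I_N -> R) : Prop :=
  forall n : nat,
    (forall i : 'I_N,
       Dc dx (Dc dx (Phi n)) i = - (dens dv (f n) i - dens dv (g n) i))
    /\ \sum_(i < N) dx * Phi n i = 0.

(* Modified entropy H^Delta_delta[F^n] (meaningful for n >= 1). *)
Definition Hmod (R : realType) (N L : nat) (dt dx dv rho delta : R)
  (chi1 chi2 : 'I_(2 * L) -> R) (f g : nat -> 'I_N -> 'I_(2 * L) -> R)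
  (Phi : nat -> 'I_N -> R) (n : nat) : R :=
  2^-1 * normD2 dx dv rho chi1 chi2 (f n) (g n)
  + delta * inner2 dx (fun i => curr dv (f n) i - curr dv (g n) i) (Dc dx (Phi n))
  + delta / (2 * dt) *
      \sum_(i < N) dx * (Dc dx (Phi n) i - Dc dx (Phi n.-1) i) ^+ 2.

(* For fixed N the modified entropy is a small perturbation of the entropy
   1/2 ||F||^2, which the scheme dissipates strictly.  The discrete energy
   identity reads
     ||F^{n+1}||^2 - ||F^n||^2 + ||F^{n+1} - F^n||^2
       = -2 dt (lambda * [squared space jumps] + dx * [relaxation dissipation]).
   The relaxation dissipation controls every part of F^{n+1} except its charge
   u_h, and u_h has zero mean (it is a discrete Laplacian), so a discrete
   Poincare inequality on the periodic mesh bounds sum u_h^2 by N^2 times the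
   squared jumps; hence ||F^{n+1}||^2 is at most a constant times the
   dissipation.  Cauchy-Schwarz and the same Poincare inequality for Phi bound
   the delta-terms by C delta dt (||F^{n+1}||^2 + ||F^n||^2), and
   ||F^n||^2 <= 2 ||F^{n+1}||^2 + 2 ||F^{n+1} - F^n||^2, so they are absorbed
   for small delta.  The constants depend on N: the decay comes from the
   numerical diffusion of the scheme, not from a mesh-uniform hypocoercivity
   estimate. *)

From mathcomp Require Import all_boot all_order all_algebra.
From mathcomp Require Import reals.
From mathcomp Require Import ring lra zify.
Import Order.TTheory GRing.Theory Num.Theory.
Local Open Scope ring_scope.

Set Implicit Arguments. Unset Strict Implicit. Unset Printing Implicit Defensive.

Section Sums.
Variable R : realDomainType.
Implicit Types (I : finType).

Lemma cauchy_schwarz_weighted I (c y z : I -> R) : (forall i, 0 <= c i) ->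
  (\sum_i c i * y i * z i) ^+ 2 <=
  (\sum_i c i * y i ^+ 2) * (\sum_i c i * z i ^+ 2).
Proof.
move=> c_ge0.
have lagrange : \sum_i \sum_j c i * c j * (y i * z j - y j * z i) ^+ 2 =
    2 * ((\sum_i c i * y i ^+ 2) * (\sum_i c i * z i ^+ 2)
         - (\sum_i c i * y i * z i) ^+ 2).
  set A := \sum_i c i * y i ^+ 2; set B := \sum_i c i * z i ^+ 2.
  set C := \sum_i c i * y i * z i.
  have -> : 2 * (A * B - C ^+ 2) = A * B + B * A - 2 * (C * C) by ring.
  rewrite !big_distrlr mulr_sumr -big_split -sumrB /=; apply: eq_bigr => i _.
  rewrite mulr_sumr -big_split -sumrB /=; apply: eq_bigr => j _; ring.
have : 0 <= \sum_i \sum_j c i * c j * (y i * z j - y j * z i) ^+ 2.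
  by do 2!apply: sumr_ge0 => ? _; rewrite mulr_ge0 ?sqr_ge0 ?mulr_ge0.
by rewrite lagrange pmulr_rge0 // subr_ge0.
Qed.

Lemma cauchy_schwarz I (y z : I -> R) :
  (\sum_i y i * z i) ^+ 2 <= (\sum_i y i ^+ 2) * (\sum_i z i ^+ 2).
Proof.
have := @cauchy_schwarz_weighted I (fun=> 1) y z (fun=> ler01).
under [\sum_i 1 * y i * z i]eq_bigr do rewrite mul1r.
under [\sum_i 1 * y i ^+ 2]eq_bigr do rewrite mul1r.
by under [\sum_i 1 * z i ^+ 2]eq_bigr do rewrite mul1r.
Qed.

Lemma sqr_sum_le_card I (y : I -> R) :
  (\sum_i y i) ^+ 2 <= #|I|%:R * \sum_i y i ^+ 2.
Proof.
have := cauchy_schwarz (fun=> 1) y.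
rewrite sumr_const expr1n.
by under [\sum_i 1 * y i]eq_bigr do rewrite mul1r.
Qed.

Lemma sumr_sumr_sqr_sub I (a : I -> R) : \sum_i a i = 0 ->
  \sum_i \sum_j (a j - a i) ^+ 2 = 2 * #|I|%:R * \sum_i a i ^+ 2.
Proof.
move=> a0.
have cross : \sum_i \sum_j a i * a j = 0 by rewrite -big_distrlr /= a0 mul0r.
have expand i : \sum_j (a j - a i) ^+ 2 =
    \sum_j a j ^+ 2 + \sum_(j : I) a i ^+ 2 - 2 * \sum_j a i * a j.
  by rewrite mulr_sumr -big_split -sumrB /=; apply: eq_bigr => j _; ring.
rewrite (eq_bigr _ (fun i _ => expand i)) sumrB -mulr_sumr cross mulr0 subr0.
rewrite big_split /= sumr_const.
under [X in _ + X]eq_bigr do rewrite sumr_const.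
by rewrite sumrMnl -mulr_natl; ring.
Qed.

End Sums.

Lemma iter_inj (T : Type) (f : T -> T) : injective f -> forall n, injective (iter n f).
Proof. by move=> f_inj; elim=> [|n IHn] x y //= /f_inj /IHn. Qed.

Section Orbits.
Variable N : nat.

Lemma val_iter_ordS m (i : 'I_N) : val (iter m (@ordS N) i) = ((i + m) %% N)%N.
Proof.
elim: m => [|m IHm] /=; first by rewrite addn0 modn_small.
by rewrite IHm -addn1 modnDml -addnA addn1.
Qed.

Lemma iter_ordS_onto p : coprime p N ->
  forall i j : 'I_N, exists2 m, (m < N)%N & iter m (iter p (@ordS N)) i = j.
Proof.
move=> coprime_pN i j.
pose step m := iter m (iter p (@ordS N)) i.
have val_step m : val (step m) = ((i + m * p) %% N)%N by rewrite /step -iterM val_iter_ordS.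
have step_inj : injective (fun m : 'I_N => step m).
  move=> a b /(congr1 val) /eqP; rewrite !val_step eqn_modDl => eq_ab.
  apply: val_inj => /=.
  wlog le_ab : a b eq_ab / (a <= b)%N.
    by move=> W; case/orP: (leq_total a b) => ?; [|apply/esym]; apply: W; rewrite // eq_sym.
  move: eq_ab; rewrite eq_sym eqn_mod_dvd ?leq_mul2r ?le_ab ?orbT // -mulnBl.
  rewrite Gauss_dvdl; last by rewrite coprime_sym.
  have := ltn_ord b; have := ltn_ord a => lt_aN lt_bN dvd_ab.
  by have [|/dvdn_leq /(_ dvd_ab)] := posnP (b - a); lia.
have /codomP [m ->] := injF_onto step_inj j.
by exists m.
Qed.

Lemma sumr_ordS (V : nmodType) (F : 'I_N -> V) : \sum_i F (ordS i) = \sum_i F i.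
Proof. by rewrite [RHS](reindex_inj (@ordS_inj N)). Qed.

Lemma sumr_ord_pred (V : nmodType) (F : 'I_N -> V) : \sum_i F (ord_pred i) = \sum_i F i.
Proof. by rewrite [RHS](reindex_inj (@ord_pred_inj N)). Qed.

End Orbits.

Section Poincare.
Variables (R : realDomainType) (N : nat) (s : 'I_N -> 'I_N).
Hypotheses (s_inj : injective s)
  (s_cyclic : forall i j, exists2 m, (m < N)%N & iter m s i = j).

Lemma sqr_sub_iter_le (a : 'I_N -> R) i m : (m <= N)%N ->
  (a (iter m s i) - a i) ^+ 2 <=
  N%:R * \sum_(t < N) (a (s (iter t s i)) - a (iter t s i)) ^+ 2.
Proof.
move=> le_mN; set d := fun t => a (s (iter t s i)) - a (iter t s i).
have -> : a (iter m s i) - a i = \sum_(t < m) d t.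
  by rewrite -(telescope_sumr (fun t => a (iter t s i)) (leq0n m)) big_mkord.
apply: le_trans (sqr_sum_le_card _) _; rewrite card_ord.
have sq_ge0 t : 0 <= d t ^+ 2 := sqr_ge0 _.
apply: ler_pM; rewrite ?ler0n ?sumr_ge0 ?ler_nat //.
rewrite -!(big_mkord xpredT (fun t => d t ^+ 2)) (big_cat_nat (leq0n m) le_mN) /=.
by rewrite lerDl sumr_ge0.
Qed.

Lemma poincare_cyclic (a : 'I_N -> R) : \sum_i a i = 0 ->
  \sum_i a i ^+ 2 <= N%:R ^+ 2 * \sum_i (a (s i) - a i) ^+ 2.
Proof.
move=> a0; set D := \sum_i (a (s i) - a i) ^+ 2.
set T := fun i => \sum_(t < N) (a (s (iter t s i)) - a (iter t s i)) ^+ 2.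
have sum_T : \sum_i T i = N%:R * D.
  rewrite /T exchange_big /= (eq_bigr (fun=> D)) => [|t _].
    by rewrite sumr_const card_ord mulr_natl.
  by rewrite /D [RHS](reindex_inj (@iter_inj _ _ s_inj t)).
have pair i j : (a j - a i) ^+ 2 <= N%:R * T i.
  by have [m /ltnW le_mN <-] := s_cyclic i j; exact: sqr_sub_iter_le.
have : 2 * N%:R * \sum_i a i ^+ 2 <= N%:R * (N%:R ^+ 2 * D).
  have := sumr_sumr_sqr_sub a0; rewrite card_ord => <-.
  apply: (le_trans (ler_sum _ (fun i _ => ler_sum _ (fun j _ => pair i j)))).
  rewrite [X in X <= _](_ : _ = N%:R * (N%:R ^+ 2 * D)) //.
  by rewrite exchange_big /= sumr_const card_ord -mulr_sumr sum_T; ring.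
have D_ge0 : 0 <= D by rewrite sumr_ge0 // => i _; rewrite sqr_ge0.
have [N0|N_gt0] := posnP N.
  rewrite big1 => [|i _]; last by have := ltn_ord i; lia.
  by rewrite mulr_ge0 ?sqr_ge0.
rewrite -mulrA mulrCA ler_pM2l ?ltr0n //.
have : 0 <= \sum_i a i ^+ 2 by rewrite sumr_ge0 // => i _; rewrite sqr_ge0.
lra.
Qed.

End Poincare.

Section CenteredDifference.
Variables (R : realType) (N : nat) (dx : R).
Implicit Types (u w : 'I_N -> R).

Lemma sum_Dc w : \sum_i Dc dx w i = 0.
Proof. by rewrite -mulr_suml sumrB (sumr_ordS w) (sumr_ord_pred w) subrr mul0r. Qed.

Lemma sum_mul_Dc u w : \sum_i u i * Dc dx w i = - \sum_i Dc dx u i * w i.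
Proof.
have shiftS : \sum_i u i * w (ordS i) = \sum_i u (ord_pred i) * w i.
  by rewrite -[RHS]sumr_ordS; apply: eq_bigr => i _; rewrite ordSK.
have shiftP : \sum_i u i * w (ord_pred i) = \sum_i u (ordS i) * w i.
  by rewrite -[RHS]sumr_ord_pred; apply: eq_bigr => i _; rewrite ord_predK.
rewrite /Dc -sumrN.
transitivity ((\sum_i u i * w (ordS i) - \sum_i u i * w (ord_pred i)) / (2 * dx)).
  by rewrite -sumrB mulr_suml; apply: eq_bigr => i _; ring.
by rewrite shiftS shiftP -sumrB mulr_suml; apply: eq_bigr => i _; ring.
Qed.

Lemma sum_sqr_Dc_le (Phi w : 'I_N -> R) : odd N -> 0 < dx ->
  (forall i, Dc dx (Dc dx Phi) i = w i) -> \sum_i dx * Phi i = 0 ->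
  \sum_i Dc dx Phi i ^+ 2 <= 4 * N%:R ^+ 2 * dx ^+ 2 * \sum_i w i ^+ 2.
Proof.
move=> oddN dx_gt0 DcDc_Phi mean_Phi.
set S := \sum_i Dc dx Phi i ^+ 2.
have S_by_parts : S = - \sum_i w i * Phi i.
  rewrite /S (eq_bigr (fun i => Dc dx Phi i * Dc dx Phi i)) => [|i _]; last exact: expr2.
  by rewrite sum_mul_Dc; under eq_bigr do rewrite DcDc_Phi.
have sum_Phi : \sum_i Phi i = 0.
  by move/eqP: mean_Phi; rewrite -mulr_sumr mulf_eq0 gt_eqF // => /eqP.
(* [Dc dx Phi] only sees differences across two cells; steps of two cells
   visit the whole mesh because N is odd. *)
have poincare_Phi : \sum_i Phi i ^+ 2 <= 4 * N%:R ^+ 2 * dx ^+ 2 * S.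
  have step2_inj := @iter_inj _ _ (@ordS_inj N) 2.
  have step2_onto := @iter_ordS_onto N 2 (etrans (coprime2n N) oddN).
  have shift2 : \sum_i (Phi (iter 2 (@ordS N) i) - Phi i) ^+ 2 = 4 * dx ^+ 2 * S.
    rewrite -sumr_ord_pred /S mulr_sumr; apply: eq_bigr => i _.
    by rewrite /= ord_predK /Dc; field; rewrite gt_eqF.
  apply: le_trans (poincare_cyclic step2_inj step2_onto sum_Phi) _.
  by rewrite shift2 [X in _ <= X](_ : _ = N%:R ^+ 2 * (4 * dx ^+ 2 * S)) //; ring.
have S_ge0 : 0 <= S by rewrite sumr_ge0 // => i _; rewrite sqr_ge0.
have : S * S <= S * (4 * N%:R ^+ 2 * dx ^+ 2 * \sum_i w i ^+ 2).
  rewrite {1}S_by_parts {1}S_by_parts mulrNN -expr2.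
  apply: le_trans (cauchy_schwarz _ _) _.
  rewrite [X in _ <= X](_ : _ = (\sum_i w i ^+ 2) * (4 * N%:R ^+ 2 * dx ^+ 2 * S)); last ring.
  by apply: ler_wpM2l; rewrite ?sumr_ge0 // => i _; rewrite sqr_ge0.
have : 0 <= 4 * N%:R ^+ 2 * dx ^+ 2 * \sum_i w i ^+ 2.
  by rewrite !mulr_ge0 ?sqr_ge0 ?sumr_ge0 ?(ltW dx_gt0) // => i _; rewrite sqr_ge0.
nra.
Qed.

End CenteredDifference.

Lemma sqr_subr_le (R : realFieldType) (x y a b c A B : R) : 0 <= A -> 0 <= B ->
  2 * a <= c -> 2 * b <= c -> x ^+ 2 <= a * A -> y ^+ 2 <= b * B ->
  (x - y) ^+ 2 <= c * (A + B).
Proof.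
move=> A_ge0 B_ge0 ac bc xA yB.
have := sqr_ge0 (x + y); have := ler_wpM2r A_ge0 ac; have := ler_wpM2r B_ge0 bc.
rewrite sqrrB sqrrD; lra.
Qed.

Definition Cmom (R : realFieldType) (rho D1 D2 : R) :=
  2 * (rho * (1 + D1) + rho^-1 * (1 + D2)).

Lemma Cmom_ge (R : realFieldType) (rho D1 D2 : R) : 0 < rho -> 0 <= D1 -> 0 <= D2 ->
  [/\ 2 * rho <= Cmom rho D1 D2, 2 * rho^-1 <= Cmom rho D1 D2,
      2 * (rho * D1) <= Cmom rho D1 D2 & 2 * (rho^-1 * D2) <= Cmom rho D1 D2].
Proof.
move=> rho_gt0 D1_ge0 D2_ge0; have rhoV_gt0 : 0 < rho^-1 by rewrite invr_gt0.
have := mulr_ge0 (ltW rho_gt0) D1_ge0; have := mulr_ge0 (ltW rhoV_gt0) D2_ge0.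
by rewrite /Cmom; split; nra.
Qed.

Lemma ler_norm_sqr (R : realDomainType) (x y : R) : 0 <= y -> x ^+ 2 <= y ^+ 2 -> `|x| <= y.
Proof. by move=> y_ge0; rewrite -(real_normK (num_real x)) ler_sqr ?nnegrE. Qed.

Lemma perturbed_entropy_step (R : realFieldType) (nX nY nXY D P A c dt : R) :
  0 < c -> 0 < dt -> 0 <= nX -> 0 <= nXY -> 0 <= A ->
  nX - nY + nXY = - (2 * dt) * D -> nX <= c * D -> nY <= 2 * nX + 2 * nXY ->
  P <= A * (nX + nY) -> 6 * A * c <= dt -> 4 * A <= 1 ->
  2^-1 * (nX - nY) + P <= - (dt / (2 * c) * nX).
Proof.
move=> c_gt0 dt_gt0 nX_ge0 nXY_ge0 A_ge0 energy coercive triangle pert small_c small_1.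
have c_neq0 : c != 0 by rewrite gt_eqF.
have dissipation : dt / c * nX <= dt * D.
  rewrite -mulrA; apply: ler_wpM2l; first exact: ltW.
  by rewrite ler_pdivrMl.
have absorb_nX : 3 * (A * nX) <= dt / (2 * c) * nX.
  rewrite mulrA; apply: ler_wpM2r => //.
  by rewrite ler_pdivlMr ?mulr_gt0 // (_ : 3 * A * (2 * c) = 6 * A * c) //; ring.
have absorb_nXY : 4 * (A * nXY) <= nXY.
  by rewrite mulrA -[X in _ <= X]mul1r; apply: ler_wpM2r.
have split_nY : A * nY <= 2 * (A * nX) + 2 * (A * nXY).
  by rewrite mulrCA [2 * (A * nXY)]mulrCA -mulrDr; apply: ler_wpM2l.
have halve : dt / c * nX = 2 * (dt / (2 * c) * nX) by field.
rewrite mulrDr in pert; lra.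
Qed.

Section Kinetic.
Variables (R : realType) (N L : nat) (dv : R).
Hypothesis dv_gt0 : 0 < dv.
Implicit Types (u f g : 'I_N -> 'I_(2 * L) -> R) (w : 'I_(2 * L) -> R).

Definition wnorm w u i := \sum_k dv * (u i k ^+ 2 / w k).

Lemma wnorm_ge0 w u i : (forall k, 0 < w k) -> 0 <= wnorm w u i.
Proof.
by move=> w_gt0; rewrite sumr_ge0 // => k _; rewrite mulr_ge0 ?divr_ge0 ?sqr_ge0 ?ltW.
Qed.

Lemma sqr_moment_le w (y h : 'I_(2 * L) -> R) : (forall k, 0 < w k) ->
  (\sum_k dv * y k * h k) ^+ 2 <=
  (\sum_k dv * y k ^+ 2 * w k) * \sum_k dv * (h k ^+ 2 / w k).
Proof.
move=> w_gt0; have w_neq0 k : w k != 0 by rewrite gt_eqF.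
rewrite (eq_bigr (fun k => dv * w k * y k * (h k / w k))) => [|k _]; last by field.
rewrite [X in _ <= X * _](eq_bigr (fun k => dv * w k * y k ^+ 2)) => [|k _]; last by ring.
rewrite [X in _ <= _ * X](eq_bigr (fun k => dv * w k * (h k / w k) ^+ 2)) => [|k _].
  by apply: cauchy_schwarz_weighted => k; rewrite mulr_ge0 ?ltW.
by field.
Qed.

Lemma sqr_dens_le w u i : (forall k, 0 < w k) ->
  dens dv u i ^+ 2 <= (\sum_k dv * w k) * wnorm w u i.
Proof.
move=> /(sqr_moment_le (fun=> 1) (u i)).
by under eq_bigr do rewrite mulr1; under [\sum_k _ * 1 ^+ 2 * _]eq_bigr do rewrite expr1n mulr1.
Qed.

Lemma sqr_curr_le w u i : (forall k, 0 < w k) ->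
  curr dv u i ^+ 2 <= (\sum_k dv * vel dv k ^+ 2 * w k) * wnorm w u i.
Proof. exact: sqr_moment_le. Qed.

Variables (rho : R) (chi1 chi2 : 'I_(2 * L) -> R) (D1 D2 : R).
Hypotheses (rho_gt0 : 0 < rho)
  (chi1_gt0 : forall k, 0 < chi1 k) (chi2_gt0 : forall k, 0 < chi2 k)
  (mass1 : \sum_k dv * chi1 k = 1) (mass2 : \sum_k dv * chi2 k = 1)
  (energy1 : \sum_k dv * vel dv k ^+ 2 * chi1 k <= D1)
  (energy2 : \sum_k dv * vel dv k ^+ 2 * chi2 k <= D2).

Definition weight_f k := chi1 k * rho.
Definition weight_g k := chi2 k / rho.

Lemma weight_f_gt0 k : 0 < weight_f k. Proof. exact: mulr_gt0. Qed.
Lemma weight_g_gt0 k : 0 < weight_g k. Proof. exact: divr_gt0. Qed.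

Definition cell_energy f g i := wnorm weight_f f i + wnorm weight_g g i.

Lemma cell_energy_ge0 f g i : 0 <= cell_energy f g i.
Proof. by rewrite addr_ge0 // wnorm_ge0 // => k; [apply: weight_f_gt0 | apply: weight_g_gt0]. Qed.

Lemma normD2E dx f g : normD2 dx dv rho chi1 chi2 f g = dx * \sum_i cell_energy f g i.
Proof.
rewrite /normD2 mulr_sumr; apply: eq_bigr => i _.
rewrite /cell_energy /wnorm -big_split mulr_sumr; apply: eq_bigr => k _ /=.
by rewrite /weight_f /weight_g; field; rewrite !gt_eqF.
Qed.

Lemma normD2_ge0 dx f g : 0 < dx -> 0 <= normD2 dx dv rho chi1 chi2 f g.
Proof.
move=> dx_gt0; rewrite normD2E mulr_ge0 ?(ltW dx_gt0) // sumr_ge0 // => i _.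
exact: cell_energy_ge0.
Qed.

Lemma normD2_le_triangle dx f g f' g' : 0 < dx ->
  normD2 dx dv rho chi1 chi2 f g <= 2 * normD2 dx dv rho chi1 chi2 f' g'
    + 2 * normD2 dx dv rho chi1 chi2 (fun i k => f' i k - f i k) (fun i k => g' i k - g i k).
Proof.
move=> dx_gt0.
have := normD2_ge0 (fun i k => 2 * f' i k - f i k) (fun i k => 2 * g' i k - g i k) dx_gt0.
suff -> : normD2 dx dv rho chi1 chi2 (fun i k => 2 * f' i k - f i k) (fun i k => 2 * g' i k - g i k)
  = 2 * normD2 dx dv rho chi1 chi2 f' g'
    + 2 * normD2 dx dv rho chi1 chi2 (fun i k => f' i k - f i k) (fun i k => g' i k - g i k)
    - normD2 dx dv rho chi1 chi2 f g.
  by rewrite subr_ge0.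
rewrite /normD2 !mulr_sumr -big_split -sumrB /=; apply: eq_bigr => i _.
rewrite !mulr_sumr -big_split -sumrB /=; apply: eq_bigr => k _; ring.
Qed.

Lemma sqr_dens_f_le f i : dens dv f i ^+ 2 <= rho * wnorm weight_f f i.
Proof.
have -> : rho = \sum_k dv * weight_f k.
  by rewrite -[LHS]mul1r -mass1 mulr_suml; apply: eq_bigr => k _; rewrite /weight_f mulrA.
exact/sqr_dens_le/weight_f_gt0.
Qed.

Lemma sqr_dens_g_le g i : dens dv g i ^+ 2 <= rho^-1 * wnorm weight_g g i.
Proof.
have -> : rho^-1 = \sum_k dv * weight_g k.
  by rewrite -[LHS]mul1r -mass2 mulr_suml; apply: eq_bigr => k _; rewrite /weight_g mulrA.
exact/sqr_dens_le/weight_g_gt0.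
Qed.

Lemma sqr_curr_f_le f i : curr dv f i ^+ 2 <= rho * D1 * wnorm weight_f f i.
Proof.
apply: le_trans (sqr_curr_le _ _ weight_f_gt0) _.
apply: ler_wpM2r; first exact: wnorm_ge0 weight_f_gt0.
rewrite /weight_f (eq_bigr (fun k => rho * (dv * vel dv k ^+ 2 * chi1 k))) => [|k _]; last by ring.
by rewrite -mulr_sumr; apply: ler_wpM2l => //; exact: ltW.
Qed.

Lemma sqr_curr_g_le g i : curr dv g i ^+ 2 <= rho^-1 * D2 * wnorm weight_g g i.
Proof.
apply: le_trans (sqr_curr_le _ _ weight_g_gt0) _.
apply: ler_wpM2r; first exact: wnorm_ge0 weight_g_gt0.
rewrite /weight_g (eq_bigr (fun k => rho^-1 * (dv * vel dv k ^+ 2 * chi2 k))) => [|k _].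
  by rewrite -mulr_sumr; apply: ler_wpM2l => //; rewrite invr_ge0 ltW.
by ring.
Qed.

Lemma second_moment_ge0 w : (forall k, 0 < w k) -> 0 <= \sum_k dv * vel dv k ^+ 2 * w k.
Proof.
move=> w_gt0; rewrite sumr_ge0 // => k _.
by apply: mulr_ge0; [apply: mulr_ge0 |]; rewrite ?sqr_ge0 ?ltW.
Qed.

Lemma D_ge0 : 0 <= D1 /\ 0 <= D2.
Proof.
split; [apply: le_trans energy1 | apply: le_trans energy2]; exact: second_moment_ge0.
Qed.

Lemma Cmom_ge0 : 0 <= Cmom rho D1 D2.
Proof.
have [D1_ge0 D2_ge0] := D_ge0; have [C_ge _ _ _] := Cmom_ge rho_gt0 D1_ge0 D2_ge0.
by apply: le_trans C_ge; rewrite mulr_ge0 ?ltW.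
Qed.

Lemma sqr_charge_le f g i :
  (dens dv f i - dens dv g i) ^+ 2 <= Cmom rho D1 D2 * cell_energy f g i.
Proof.
have [D1_ge0 D2_ge0] := D_ge0; have [Cf Cg _ _] := Cmom_ge rho_gt0 D1_ge0 D2_ge0.
exact: sqr_subr_le (wnorm_ge0 _ _ weight_f_gt0) (wnorm_ge0 _ _ weight_g_gt0) Cf Cg
  (sqr_dens_f_le f i) (sqr_dens_g_le g i).
Qed.

Lemma sqr_current_le f g i :
  (curr dv f i - curr dv g i) ^+ 2 <= Cmom rho D1 D2 * cell_energy f g i.
Proof.
have [D1_ge0 D2_ge0] := D_ge0; have [_ _ Cf Cg] := Cmom_ge rho_gt0 D1_ge0 D2_ge0.
exact: sqr_subr_le (wnorm_ge0 _ _ weight_f_gt0) (wnorm_ge0 _ _ weight_g_gt0) Cf Cg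
  (sqr_curr_f_le f i) (sqr_curr_g_le g i).
Qed.

Definition relax_dissipation f g i :=
  wnorm weight_f f i / rho + rho * wnorm weight_g g i + 2 * (dens dv f i * dens dv g i).

Lemma relax_dissipation_ge0 f g i : 0 <= relax_dissipation f g i.
Proof.
have rho_neq0 : rho != 0 by rewrite gt_eqF.
have := sqr_dens_f_le f i; have := sqr_dens_g_le g i; rewrite /relax_dissipation.
move: (wnorm weight_f f i) (wnorm weight_g g i) (dens dv f i) (dens dv g i) => A B x y yB xA.
have xA' : (x / rho) ^+ 2 <= A / rho.
  rewrite expr_div_n (_ : A / rho = rho * A / rho ^+ 2); last by field.
  by rewrite ler_wpM2r // invr_ge0 sqr_ge0.
have yB' : (rho * y) ^+ 2 <= rho * B.
  rewrite exprMn (_ : rho * B = rho ^+ 2 * (rho^-1 * B)); last by field.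
  by rewrite ler_wpM2l // sqr_ge0.
have := sqr_ge0 (x / rho + rho * y).
rewrite sqrrD (_ : x / rho * (rho * y) = x * y); last by field.
lra.
Qed.

Lemma cell_energy_le_relax f g i : cell_energy f g i <=
  (rho + rho^-1) * (relax_dissipation f g i + (dens dv f i - dens dv g i) ^+ 2).
Proof.
have rho_neq0 : rho != 0 by rewrite gt_eqF.
have := wnorm_ge0 f i weight_f_gt0; have := wnorm_ge0 g i weight_g_gt0.
rewrite /cell_energy /relax_dissipation.
move: (wnorm weight_f f i) (wnorm weight_g g i) (dens dv f i) (dens dv g i) => A B x y B_ge0 A_ge0.
have -> : (rho + rho^-1) * (A / rho + rho * B + 2 * (x * y) + (x - y) ^+ 2)
    = A + B + (A / rho ^+ 2 + rho ^+ 2 * B + (rho + rho^-1) * (x ^+ 2 + y ^+ 2)).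
  by field.
have rho_ge0 := ltW rho_gt0.
by rewrite lerDl !addr_ge0 ?mulr_ge0 ?divr_ge0 ?addr_ge0 ?invr_ge0 ?sqr_ge0.
Qed.

Definition jump u : 'I_N -> 'I_(2 * L) -> R := fun i k => u (ordS i) k - u i k.

Lemma sum_mul_flux_diff lam u k :
  \sum_i u i k * (flux dv lam u i k - flux dv lam u (ord_pred i) k)
  = dv * lam * \sum_i jump u i k ^+ 2.
Proof.
set F := fun i => flux dv lam u i k.
have shift : \sum_i u i k * F (ord_pred i) = \sum_i u (ordS i) k * F i.
  by rewrite -[LHS]sumr_ordS; apply: eq_bigr => i _; rewrite ordSK.
transitivity (\sum_i (u i k - u (ordS i) k) * F i).
  rewrite (eq_bigr (fun i => u i k * F i - u i k * F (ord_pred i))) => [|i _]; last first.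
    by rewrite mulrBr.
  by rewrite sumrB shift -sumrB; apply: eq_bigr => i _; rewrite mulrBl.
transitivity (dv * (vel dv k / 2) * \sum_i (u i k ^+ 2 - u (ordS i) k ^+ 2)
              + dv * lam * \sum_i jump u i k ^+ 2).
  by rewrite !mulr_sumr -big_split /=; apply: eq_bigr => i _; rewrite /F /flux /jump; ring.
by rewrite sumrB (sumr_ordS (fun i => u i k ^+ 2)) subrr mulr0 add0r.
Qed.

Lemma transport_energy_identity (dt dx lam : R) w (u v s : 'I_N -> 'I_(2 * L) -> R) :
  0 < dt -> 0 < dx -> (forall k, 0 < w k) ->
  (forall i k, (u i k - v i k) / dt
     + (flux dv lam u i k - flux dv lam u (ord_pred i) k) / (dx * dv) = s i k) ->
  \sum_i \sum_k dx * dv * (u i k * (u i k - v i k) / w k)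
  = dt * (dx * \sum_i \sum_k dv * (u i k * s i k / w k)
          - lam * \sum_i wnorm w (jump u) i).
Proof.
move=> dt_gt0 dx_gt0 w_gt0 step.
set Fd := fun i k => flux dv lam u i k - flux dv lam u (ord_pred i) k.
have flux_part : \sum_i \sum_k (w k)^-1 * (u i k * Fd i k)
    = lam * \sum_i wnorm w (jump u) i.
  rewrite /wnorm [LHS]exchange_big [in RHS]exchange_big mulr_sumr /=.
  apply: eq_bigr => k _.
  rewrite -mulr_sumr /Fd sum_mul_flux_diff !mulr_sumr; apply: eq_bigr => i _.
  by field; rewrite gt_eqF.
transitivity (\sum_i \sum_k dt * (dx * (dv * (u i k * s i k / w k))
                                  - (w k)^-1 * (u i k * Fd i k))).
  apply: eq_bigr => i _; apply: eq_bigr => k _; rewrite -(step i k) /Fd.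
  by field; rewrite !gt_eqF.
rewrite -flux_part mulrBr mulrA !mulr_sumr -sumrB; apply: eq_bigr => i _.
by rewrite !mulr_sumr -sumrB; apply: eq_bigr => k _; ring.
Qed.

Lemma scheme_energy_identity (dt dx lam : R) (fX fY gX gY : 'I_N -> 'I_(2 * L) -> R) :
  0 < dt -> 0 < dx ->
  (forall i k, (fX i k - fY i k) / dt
      + (flux dv lam fX i k - flux dv lam fX (ord_pred i) k) / (dx * dv)
    = - rho * chi1 k * dens dv gX i - rho^-1 * fX i k) ->
  (forall i k, (gX i k - gY i k) / dt
      + (flux dv lam gX i k - flux dv lam gX (ord_pred i) k) / (dx * dv)
    = - rho^-1 * chi2 k * dens dv fX i - rho * gX i k) ->
  normD2 dx dv rho chi1 chi2 fX gX - normD2 dx dv rho chi1 chi2 fY gY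
  + normD2 dx dv rho chi1 chi2 (fun i k => fX i k - fY i k) (fun i k => gX i k - gY i k)
  = - (2 * dt) * (lam * \sum_i cell_energy (jump fX) (jump gX) i
                  + dx * \sum_i relax_dissipation fX gX i).
Proof.
move=> dt_gt0 dx_gt0 step_f step_g.
have rho_neq0 : rho != 0 by rewrite gt_eqF.
have Ef := transport_energy_identity dt_gt0 dx_gt0 weight_f_gt0 step_f.
have Eg := transport_energy_identity dt_gt0 dx_gt0 weight_g_gt0 step_g.
have polarization :
  normD2 dx dv rho chi1 chi2 fX gX - normD2 dx dv rho chi1 chi2 fY gY
  + normD2 dx dv rho chi1 chi2 (fun i k => fX i k - fY i k) (fun i k => gX i k - gY i k)
  = 2 * (\sum_i \sum_k dx * dv * (fX i k * (fX i k - fY i k) / weight_f k)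
         + \sum_i \sum_k dx * dv * (gX i k * (gX i k - gY i k) / weight_g k)).
  rewrite /normD2 -sumrB -big_split -big_split mulr_sumr /=; apply: eq_bigr => i _.
  rewrite -sumrB -!big_split mulr_sumr /=; apply: eq_bigr => k _.
  by rewrite /weight_f /weight_g; field; rewrite !gt_eqF.
have sources :
    \sum_i \sum_k dv * (fX i k * (- rho * chi1 k * dens dv gX i - rho^-1 * fX i k) / weight_f k)
    + \sum_i \sum_k dv * (gX i k * (- rho^-1 * chi2 k * dens dv fX i - rho * gX i k) / weight_g k)
    = - \sum_i relax_dissipation fX gX i.
  rewrite -big_split -sumrN /=; apply: eq_bigr => i _; rewrite /relax_dissipation /wnorm.
  have -> : 2 * (dens dv fX i * dens dv gX i)
      = \sum_k dv * fX i k * dens dv gX i + \sum_k dv * gX i k * dens dv fX i.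
    by rewrite -!mulr_suml /dens; ring.
  rewrite mulr_suml mulr_sumr -!big_split -sumrN /=; apply: eq_bigr => k _.
  by rewrite /weight_f /weight_g; field; rewrite !gt_eqF.
have cells : \sum_i cell_energy (jump fX) (jump gX) i
    = \sum_i wnorm weight_f (jump fX) i + \sum_i wnorm weight_g (jump gX) i by rewrite -big_split.
rewrite polarization Ef Eg cells -[\sum_i relax_dissipation fX gX i]opprK -sources.
ring.
Qed.

Definition charge f g i := dens dv f i - dens dv g i.

Definition solves_poisson dx f g (Phi : 'I_N -> R) : Prop :=
  (forall i, Dc dx (Dc dx Phi) i = - charge f g i) /\ \sum_i dx * Phi i = 0.

Lemma sum_charge_eq0 dx f g Phi : solves_poisson dx f g Phi -> \sum_i charge f g i = 0.
Proof.
case=> DcDc_Phi _; apply/eqP; rewrite -oppr_eq0 -sumrN.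
by under eq_bigr do rewrite -DcDc_Phi; rewrite sum_Dc.
Qed.

Lemma dens_jump u i : dens dv (jump u) i = dens dv u (ordS i) - dens dv u i.
Proof. by rewrite /dens -sumrB; apply: eq_bigr => k _; rewrite mulrBr. Qed.

Lemma sum_sqr_charge_le f g : \sum_i charge f g i = 0 ->
  \sum_i charge f g i ^+ 2 <=
  N%:R ^+ 2 * (Cmom rho D1 D2 * \sum_i cell_energy (jump f) (jump g) i).
Proof.
move=> charge0.
have ordS_onto : forall i j : 'I_N, exists2 m, (m < N)%N & iter m (@ordS N) i = j.
  exact: iter_ordS_onto (coprime1n N).
apply: le_trans (poincare_cyclic (@ordS_inj N) ordS_onto charge0) _.
rewrite ler_wpM2l ?sqr_ge0 // mulr_sumr; apply: ler_sum => i _.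
have := sqr_charge_le (jump f) (jump g) i; rewrite !dens_jump /charge.
by congr (_ <= _); ring.
Qed.

Lemma normD2_le_dissipation dx f g : 0 < dx -> \sum_i charge f g i = 0 ->
  normD2 dx dv rho chi1 chi2 f g <= (rho + rho^-1) *
    (dx * \sum_i relax_dissipation f g i
     + dx * (N%:R ^+ 2 * (Cmom rho D1 D2 * \sum_i cell_energy (jump f) (jump g) i))).
Proof.
move=> dx_gt0 charge0.
have r_ge0 : 0 <= rho + rho^-1 by rewrite addr_ge0 ?invr_ge0 ?ltW.
apply: le_trans (_ : _ <= (rho + rho^-1) *
                         (dx * \sum_i (relax_dissipation f g i + charge f g i ^+ 2))) _.
  rewrite normD2E mulrCA; apply: ler_wpM2l; first exact: ltW.
  by rewrite mulr_sumr; apply: ler_sum => i _; exact: cell_energy_le_relax.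
apply: ler_wpM2l => //; rewrite big_split mulrDr lerD2l.
by apply: ler_wpM2l; [exact: ltW | exact: sum_sqr_charge_le].
Qed.

Hypothesis oddN : odd N.

Lemma inner2E dx (u w : 'I_N -> R) : inner2 dx u w = dx * \sum_i u i * w i.
Proof. by rewrite /inner2 mulr_sumr; apply: eq_bigr => i _; rewrite mulrA. Qed.

Lemma sum_sqr_Dc_potential_le dx f g Phi : 0 < dx -> solves_poisson dx f g Phi ->
  \sum_i Dc dx Phi i ^+ 2 <=
  4 * N%:R ^+ 2 * dx ^+ 2 * (Cmom rho D1 D2 * \sum_i cell_energy f g i).
Proof.
move=> dx_gt0 [DcDc_Phi mean_Phi].
apply: le_trans (sum_sqr_Dc_le oddN dx_gt0 DcDc_Phi mean_Phi) _.
apply: ler_wpM2l; first by rewrite mulr_ge0 ?sqr_ge0 // mulr_ge0 ?sqr_ge0.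
rewrite mulr_sumr; apply: ler_sum => i _.
by rewrite sqrrN; exact: sqr_charge_le.
Qed.

Lemma abs_inner2_curr_Dc_le dx f g Phi : 0 < dx -> solves_poisson dx f g Phi ->
  `|inner2 dx (fun i => curr dv f i - curr dv g i) (Dc dx Phi)|
  <= 2 * N%:R * Cmom rho D1 D2 * dx * normD2 dx dv rho chi1 chi2 f g.
Proof.
move=> dx_gt0 poisson; set C := Cmom rho D1 D2; set T := \sum_i cell_energy f g i.
have CT_ge0 : 0 <= C * T.
  by rewrite mulr_ge0 ?Cmom_ge0 // sumr_ge0 // => i _; exact: cell_energy_ge0.
have sum_sqr_curr : \sum_i (curr dv f i - curr dv g i) ^+ 2 <= C * T.
  by rewrite mulr_sumr; apply: ler_sum => i _; exact: sqr_current_le.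
have sum_sqr_Dc := sum_sqr_Dc_potential_le dx_gt0 poisson.
have inner_sqr : (\sum_i (curr dv f i - curr dv g i) * Dc dx Phi i) ^+ 2
    <= (2 * N%:R * dx * (C * T)) ^+ 2.
  apply: le_trans (cauchy_schwarz _ _) _.
  rewrite (_ : (2 * N%:R * dx * (C * T)) ^+ 2
             = (C * T) * (4 * N%:R ^+ 2 * dx ^+ 2 * (C * T))); last by ring.
  by apply: ler_pM; rewrite ?sumr_ge0 // => i _; rewrite sqr_ge0.
have bound_ge0 : 0 <= 2 * N%:R * dx * (C * T).
  exact: mulr_ge0 (mulr_ge0 (mulr_ge0 (ler0n _ 2) (ler0n _ N)) (ltW dx_gt0)) CT_ge0.
rewrite normD2E inner2E normrM (ger0_norm (ltW dx_gt0)).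
rewrite (_ : _ * (dx * T) = dx * (2 * N%:R * dx * (C * T))); last by ring.
by apply: ler_wpM2l; [exact: ltW | exact: ler_norm_sqr].
Qed.

Lemma sum_sqr_Dc_sub_le dx fX gX fY gY (PX PY : 'I_N -> R) : 0 < dx ->
  solves_poisson dx fX gX PX -> solves_poisson dx fY gY PY ->
  \sum_i dx * (Dc dx PX i - Dc dx PY i) ^+ 2 <=
  8 * N%:R ^+ 2 * Cmom rho D1 D2 * dx ^+ 2 *
    (normD2 dx dv rho chi1 chi2 fX gX + normD2 dx dv rho chi1 chi2 fY gY).
Proof.
move=> dx_gt0 [DcDc_PX mean_PX] [DcDc_PY mean_PY].
set w := fun i => - charge fX gX i + charge fY gY i.
have DcDc_Psi i : Dc dx (Dc dx (fun j => PX j - PY j)) i = w i.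
  by rewrite /w -DcDc_PX -[charge fY gY i]opprK -DcDc_PY /Dc /=; ring.
have mean_Psi : \sum_i dx * (PX i - PY i) = 0.
  by rewrite (eq_bigr _ (fun i _ => mulrBr dx (PX i) (PY i))) sumrB mean_PX mean_PY subrr.
have sum_sqr_w : \sum_i w i ^+ 2 <= 2 * (Cmom rho D1 D2 * \sum_i cell_energy fX gX i)
                                    + 2 * (Cmom rho D1 D2 * \sum_i cell_energy fY gY i).
  rewrite !mulr_sumr -big_split /=; apply: ler_sum => i _.
  have := sqr_charge_le fX gX i; have := sqr_charge_le fY gY i.
  have := sqr_ge0 (charge fX gX i + charge fY gY i).
  rewrite /w /charge; lra.
rewrite -mulr_sumr (eq_bigr (fun i => Dc dx (fun j => PX j - PY j) i ^+ 2)) => [|i _]; last first.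
  by rewrite /Dc /=; ring.
rewrite !normD2E (_ : 8 * _ * _ * _ * _ = dx * (4 * N%:R ^+ 2 * dx ^+ 2 *
   (2 * (Cmom rho D1 D2 * \sum_i cell_energy fX gX i)
    + 2 * (Cmom rho D1 D2 * \sum_i cell_energy fY gY i)))); last by ring.
apply: ler_wpM2l; first exact: ltW.
apply: le_trans (sum_sqr_Dc_le oddN dx_gt0 DcDc_Psi mean_Psi) _.
by apply: ler_wpM2l; first by rewrite mulr_ge0 ?sqr_ge0 // mulr_ge0 ?sqr_ge0.
Qed.

Variables (lam dtmax : R).
Hypotheses (lam_gt0 : 0 < lam) (dtmax_gt0 : 0 < dtmax).

Definition Ccoer := (rho + rho^-1) * (1 + 2 * dtmax * N%:R ^+ 2 * Cmom rho D1 D2).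

Lemma normD2_le_Ccoer dt f g : 0 < dt -> dt <= dtmax -> \sum_i charge f g i = 0 ->
  normD2 (2 * lam * dt) dv rho chi1 chi2 f g <=
  Ccoer * (lam * \sum_i cell_energy (jump f) (jump g) i
           + 2 * lam * dt * \sum_i relax_dissipation f g i).
Proof.
move=> dt_gt0 dt_le charge0; have dx_gt0 : 0 < 2 * lam * dt by rewrite !mulr_gt0.
apply: le_trans (normD2_le_dissipation dx_gt0 charge0) _.
set S1 := \sum_i cell_energy _ _ i; set SD := \sum_i relax_dissipation f g i.
set c := 2 * dtmax * N%:R ^+ 2 * Cmom rho D1 D2.
have S1_ge0 : 0 <= lam * S1.
  by rewrite mulr_ge0 ?(ltW lam_gt0) // sumr_ge0 // => i _; exact: cell_energy_ge0.
have SD_ge0 : 0 <= 2 * lam * dt * SD.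
  by rewrite mulr_ge0 ?(ltW dx_gt0) // sumr_ge0 // => i _; exact: relax_dissipation_ge0.
have c_ge0 : 0 <= c.
  by rewrite mulr_ge0 ?Cmom_ge0 // mulr_ge0 ?sqr_ge0 // mulr_ge0 // ltW.
rewrite /Ccoer -/c -[_ * (1 + c) * _]mulrA.
apply: ler_wpM2l; first by apply: addr_ge0; rewrite ?invr_ge0 ltW.
have : 2 * lam * dt * (N%:R ^+ 2 * (Cmom rho D1 D2 * S1)) <= c * (lam * S1).
  set e := 2 * N%:R ^+ 2 * Cmom rho D1 D2 * (lam * S1).
  rewrite /c (_ : _ * (lam * S1) = dtmax * e); last by rewrite /e; ring.
  rewrite (_ : _ * (N%:R ^+ 2 * _) = dt * e); last by rewrite /e; ring.
  apply: ler_wpM2r => //.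
  exact: mulr_ge0 (mulr_ge0 (mulr_ge0 (ler0n _ 2) (sqr_ge0 _)) Cmom_ge0) S1_ge0.
have := mulr_ge0 c_ge0 SD_ge0; rewrite [(1 + c) * _]mulrDl mul1r [c * (_ + _)]mulrDr.
lra.
Qed.

Definition Cpert := 4 * N%:R * lam * Cmom rho D1 D2 + 16 * N%:R ^+ 2 * Cmom rho D1 D2 * lam ^+ 2.

Definition delta2 := (6 * Cpert * Ccoer + 4 * Cpert * dtmax + 1)^-1.

Lemma Cpert_ge0 : 0 <= Cpert.
Proof.
have lam_ge0 := ltW lam_gt0; have C_ge0 := Cmom_ge0.
rewrite addr_ge0 // mulr_ge0 ?sqr_ge0 //.
  by rewrite mulr_ge0 // mulr_ge0.
by rewrite mulr_ge0 // mulr_ge0 ?sqr_ge0.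
Qed.

Lemma Ccoer_gt0 : 0 < Ccoer.
Proof.
have c_ge0 : 0 <= 2 * dtmax * N%:R ^+ 2 * Cmom rho D1 D2.
  by rewrite mulr_ge0 ?Cmom_ge0 // mulr_ge0 ?sqr_ge0 // mulr_ge0 // ltW.
have one_c_gt0 : 0 < 1 + 2 * dtmax * N%:R ^+ 2 * Cmom rho D1 D2 by lra.
by rewrite /Ccoer mulr_gt0 // addr_gt0 ?invr_gt0.
Qed.

Lemma delta2_gt0 : 0 < delta2.
Proof.
rewrite /delta2 invr_gt0.
have := mulr_ge0 Cpert_ge0 (ltW Ccoer_gt0); have := mulr_ge0 Cpert_ge0 (ltW dtmax_gt0).
rewrite -!mulrA; lra.
Qed.

Lemma le_delta2 dt delta : 0 < dt -> dt <= dtmax -> 0 < delta -> delta <= delta2 ->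
  6 * (delta * Cpert * dt) * Ccoer <= dt /\ 4 * (delta * Cpert * dt) <= 1.
Proof.
move=> dt_gt0 dt_le delta_gt0.
have := delta2_gt0; rewrite /delta2 invr_gt0 => den_gt0.
rewrite -[_^-1]mul1r ler_pdivlMr // => delta_le.
have x_ge0 : 0 <= delta * Cpert := mulr_ge0 (ltW delta_gt0) Cpert_ge0.
have C_gt0 := Ccoer_gt0.
have [small_C small_dtmax] : 6 * (delta * Cpert) * Ccoer <= 1 /\ 4 * (delta * Cpert) * dtmax <= 1.
  have := mulr_ge0 x_ge0 (ltW C_gt0); have := mulr_ge0 x_ge0 (ltW dtmax_gt0).
  by split; nra.
by split; nra.
Qed.

Lemma perturbation_le dt delta fX gX fY gY (PX PY : 'I_N -> R) :
  0 < dt -> 0 < delta ->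
  solves_poisson (2 * lam * dt) fX gX PX -> solves_poisson (2 * lam * dt) fY gY PY ->
  delta * inner2 (2 * lam * dt) (fun i => curr dv fX i - curr dv gX i) (Dc (2 * lam * dt) PX)
  - delta * inner2 (2 * lam * dt) (fun i => curr dv fY i - curr dv gY i) (Dc (2 * lam * dt) PY)
  + delta / (2 * dt) *
      \sum_(i < N) 2 * lam * dt * (Dc (2 * lam * dt) PX i - Dc (2 * lam * dt) PY i) ^+ 2
  <= delta * Cpert * dt * (normD2 (2 * lam * dt) dv rho chi1 chi2 fX gX
                           + normD2 (2 * lam * dt) dv rho chi1 chi2 fY gY).
Proof.
move=> dt_gt0 delta_gt0 poisX poisY; have dx_gt0 : 0 < 2 * lam * dt by rewrite !mulr_gt0.
have /ler_normlP [_ JX] := abs_inner2_curr_Dc_le dx_gt0 poisX.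
have /ler_normlP [JY _] := abs_inner2_curr_Dc_le dx_gt0 poisY.
have W := sum_sqr_Dc_sub_le dx_gt0 poisX poisY.
have q_ge0 : 0 <= delta / (2 * dt) by rewrite ltW // divr_gt0 ?mulr_gt0.
move: (ler_wpM2l (ltW delta_gt0) JX) (ler_wpM2l (ltW delta_gt0) JY) (ler_wpM2l q_ge0 W).
set nX := normD2 _ _ _ _ _ fX gX; set nY := normD2 _ _ _ _ _ fY gY.
have -> : delta * Cpert * dt * (nX + nY) =
  delta * (2 * N%:R * Cmom rho D1 D2 * (2 * lam * dt) * nX)
  + delta * (2 * N%:R * Cmom rho D1 D2 * (2 * lam * dt) * nY)
  + delta / (2 * dt) * (8 * N%:R ^+ 2 * Cmom rho D1 D2 * (2 * lam * dt) ^+ 2 * (nX + nY)).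
  by rewrite /Cpert; field; rewrite gt_eqF.
rewrite mulrN; lra.
Qed.

Lemma modified_entropy_decay dt delta (f g : nat -> 'I_N -> 'I_(2 * L) -> R)
    (Phi : nat -> 'I_N -> R) n :
  0 < dt -> dt <= dtmax -> 0 < delta -> delta <= delta2 ->
  linearized_scheme dt (2 * lam * dt) dv lam rho chi1 chi2 f g ->
  is_potential (2 * lam * dt) dv f g Phi ->
  Hmod dt (2 * lam * dt) dv rho delta chi1 chi2 f g Phi n.+1
  - Hmod dt (2 * lam * dt) dv rho delta chi1 chi2 f g Phi n
  <= - (dt * (2 * Ccoer)^-1 * normD2 (2 * lam * dt) dv rho chi1 chi2 (f n.+1) (g n.+1)).
Proof.
move=> dt_gt0 dt_le delta_gt0 delta_le scheme potential.
have dx_gt0 : 0 < 2 * lam * dt by rewrite !mulr_gt0.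
have poisX : solves_poisson (2 * lam * dt) (f n.+1) (g n.+1) (Phi n.+1) := potential n.+1.
have poisY : solves_poisson (2 * lam * dt) (f n) (g n) (Phi n) := potential n.
have [small_C small_1] := le_delta2 dt_gt0 dt_le delta_gt0 delta_le.
have A_ge0 : 0 <= delta * Cpert * dt.
  exact: mulr_ge0 (mulr_ge0 (ltW delta_gt0) Cpert_ge0) (ltW dt_gt0).
have := perturbed_entropy_step Ccoer_gt0 dt_gt0 (normD2_ge0 _ _ dx_gt0)
  (normD2_ge0 _ _ dx_gt0) A_ge0
  (scheme_energy_identity dt_gt0 dx_gt0 (fun i k => (scheme n i k).1) (fun i k => (scheme n i k).2))
  (normD2_le_Ccoer dt_gt0 dt_le (sum_charge_eq0 poisX))
  (normD2_le_triangle (f n) (g n) (f n.+1) (g n.+1) dx_gt0)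
  (perturbation_le dt_gt0 delta_gt0 poisX poisY) small_C small_1.
have W4_ge0 : 0 <= delta / (2 * dt) * \sum_(i < N) 2 * lam * dt *
    (Dc (2 * lam * dt) (Phi n) i - Dc (2 * lam * dt) (Phi n.-1) i) ^+ 2.
  apply: mulr_ge0; first by rewrite divr_ge0 ?mulr_ge0 // ltW.
  by rewrite sumr_ge0 // => i _; rewrite mulr_ge0 ?sqr_ge0 // ltW.
rewrite /Hmod /=; lra.
Qed.

End Kinetic.

Unset Implicit Arguments.

Theorem proposition4p8
  (R : realType) (N L : nat) (vstar rho lam dtmax : R)
  (chi1 chi2 : 'I_(2 * L) -> R) (D1lo D1hi Q1 D2lo D2hi Q2 : R) :
  odd N -> (0 < L)%N -> 0 < vstar -> 0 < rho -> 0 < lam -> 0 < dtmax ->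
  (forall k, 0 < chi1 k) -> (forall k, 0 < chi2 k) ->
  (forall k, chi1 k = chi1 (rev_ord k)) -> (forall k, chi2 k = chi2 (rev_ord k)) ->
  \sum_(k < 2 * L) (vstar / L%:R) * chi1 k = 1 ->
  \sum_(k < 2 * L) (vstar / L%:R) * chi2 k = 1 ->
  0 < D1lo -> D1lo <= \sum_(k < 2 * L) (vstar / L%:R) * vel (vstar / L%:R) k ^+ 2 * chi1 k ->
  \sum_(k < 2 * L) (vstar / L%:R) * vel (vstar / L%:R) k ^+ 2 * chi1 k <= D1hi ->
  0 < D2lo -> D2lo <= \sum_(k < 2 * L) (vstar / L%:R) * vel (vstar / L%:R) k ^+ 2 * chi2 k ->
  \sum_(k < 2 * L) (vstar / L%:R) * vel (vstar / L%:R) k ^+ 2 * chi2 k <= D2hi ->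
  \sum_(k < 2 * L) (vstar / L%:R) * vel (vstar / L%:R) k ^+ 4 * chi1 k <= Q1 ->
  \sum_(k < 2 * L) (vstar / L%:R) * vel (vstar / L%:R) k ^+ 4 * chi2 k <= Q2 ->
  exists2 delta2 : R, 0 < delta2 &
    forall dt : R, 0 < dt -> dt <= dtmax ->
    forall delta : R, 0 < delta -> delta <= delta2 ->
    exists2 K : R, 0 < K &
      forall (f g : nat -> 'I_N -> 'I_(2 * L) -> R) (Phi : nat -> 'I_N -> R),
        linearized_scheme dt (2 * lam * dt) (vstar / L%:R) lam rho chi1 chi2 f g ->
        \sum_(i < N) \sum_(k < 2 * L)
            (2 * lam * dt) * (vstar / L%:R) * (f 0%N i k - g 0%N i k) = 0 ->
        is_potential (2 * lam * dt) (vstar / L%:R) f g Phi ->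
        forall n : nat, (1 <= n)%N ->
          Hmod dt (2 * lam * dt) (vstar / L%:R) rho delta chi1 chi2 f g Phi n.+1
          - Hmod dt (2 * lam * dt) (vstar / L%:R) rho delta chi1 chi2 f g Phi n
          <= - (dt * K * normD2 (2 * lam * dt) (vstar / L%:R) rho chi1 chi2
                                 (f n.+1) (g n.+1)).
Proof.
move=> oddN L_gt0 vstar_gt0 rho_gt0 lam_gt0 dtmax_gt0 chi1_gt0 chi2_gt0 _ _ mass1 mass2
  _ _ energy1 _ _ energy2 _ _.
have dv_gt0 : 0 < vstar / L%:R by rewrite divr_gt0 // ltr0n.
have Ccoer_pos := Ccoer_gt0 N dv_gt0 rho_gt0 chi1_gt0 chi2_gt0 energy1 energy2 dtmax_gt0.
exists (delta2 N rho D1hi D2hi lam dtmax).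
  exact: (delta2_gt0 N dv_gt0 rho_gt0 chi1_gt0 chi2_gt0 energy1 energy2 lam_gt0 dtmax_gt0).
move=> dt dt_gt0 dt_le delta delta_gt0 delta_le.
exists (2 * Ccoer N rho D1hi D2hi dtmax)^-1; first by rewrite invr_gt0 mulr_gt0.
move=> f g Phi scheme _ potential n _.
exact: modified_entropy_decay.
Qed.
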